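(* Let $S$ be a nonempty subset of $\mathbb{R}^m$. Then $\operatorname{Face}_{\mathcal{A}_{\bm o}}\big(\operatorname{Sign}_{\mathcal{A}_{\bm o}}(S)\big)=S$ if and only if $S$ is an open face of $\delta\mathcal{A}_{\bm o}$.
   Context: Fix nonzero $\bm u_1,\dots,\bm u_m\in\mathbb{R}^n$ (repetitions and parallel vectors allowed). For $\bm a\in\mathbb{R}^m$, $\mathcal{A}_{\bm a}$ is the arrangement of hyperplanes $\langle\bm u_i,\bm x\rangle=a_i$, $i=1,\dots,m$; the sign vector of $\bm x$ is $(\operatorname{sign}(\langle\bm u_i,\bm x\rangle-a_i))_{i=1}^m$, and $\operatorname{sign}(\mathcal{A}_{\bm a})\subseteq\{+,0,-\}^m$ is the set of all such sign vectors. Sign operator: for $S\subseteq\mathbb{R}^m$, $\operatorname{Sign}_{\mathcal{A}_{\bm o}}(S)=\bigcup_{\bm a\in S}\operatorname{sign}(\mathcal{A}_{\bm a})$. Face operator: for $\bm s\in\{+,0,-\}^m$, $\operatorname{Face}_{\mathcal{A}_{\bm o}}(\bm s)=\{\bm a\in\mathbb{R}^m:\bm s\in\operatorname{sign}(\mathcal{A}_{\bm a})\}$, and for $T\subseteq\{+,0,-\}^m$, $\operatorname{Face}_{\mathcal{A}_{\bm o}}(T)=\bigcap_{\bm s\in T}\operatorname{Face}_{\mathcal{A}_{\bm o}}(\bm s)$. A circuit is $C\subseteq[m]$ with $\{\bm u_i:i\in C\}$ a minimal linearly dependent indexed family; $\bm c^C$ satisfies $\sum c_i\bm u_i=\bm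 0$, $c_i\ne0\iff i\in C$. The derived arrangement $\delta\mathcal{A}_{\bm o}$ consists of hyperplanes $\langle\bm c^C,\bm y\rangle=0$ in $\mathbb{R}^m$; its open faces are the nonempty sets $\{\bm y:\operatorname{sign}\langle\bm c^C,\bm y\rangle=\epsilon_C\text{ for all circuits }C\}$ for fixed $\epsilon_C\in\{+,0,-\}$. *)

From HB Require Import structures.
From mathcomp Require Import all_boot all_order all_algebra.
From mathcomp Require Import boolp classical_sets reals.
Set Implicit Arguments. Unset Strict Implicit. Unset Printing Implicit Defensive.
Import Order.TTheory GRing.Theory Num.Theory.
Local Open Scope ring_scope.
Local Open Scope classical_set_scope.

Section Arr.
Variables (R : realType) (n m : nat) (u : 'I_m -> 'rV[R]_n).

Definition dotv (k : nat) (x y : 'rV[R]_k) : R := \sum_(j < k) x 0 j * y 0 j.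

(* sign vector of x in the arrangement A_a : <u_i, x> = a_i ;
   signs are encoded in int as -1, 0, 1 (sgz) *)
Definition signvec (a : 'rV[R]_m) (x : 'rV[R]_n) : 'I_m -> int :=
  fun i => sgz (dotv (u i) x - a 0 i).

Definition signs (a : 'rV[R]_m) : set ('I_m -> int) :=
  [set s | exists x : 'rV[R]_n, s = signvec a x].

Definition SignOp (S : set 'rV[R]_m) : set ('I_m -> int) :=
  [set s | exists2 a, S a & signs a s].

Definition Face1 (s : 'I_m -> int) : set 'rV[R]_m := [set a | signs a s].
Definition FaceOp (T : set ('I_m -> int)) : set 'rV[R]_m :=
  [set a | forall s, T s -> Face1 s a].

Definition lin_dep (C : {set 'I_m}) : Prop :=
  exists c : 'I_m -> R,
    (forall i, i \notin C -> c i = 0) /\ (exists i, c i != 0) /\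
    \sum_(i < m) c i *: u i = 0.

Definition circuit (C : {set 'I_m}) : Prop :=
  lin_dep C /\ forall D : {set 'I_m}, D \proper C -> ~ lin_dep D.

Definition circuit_vec (C : {set 'I_m}) (c : 'rV[R]_m) : Prop :=
  (forall i, (c 0 i != 0) = (i \in C)) /\ \sum_(i < m) c 0 i *: u i = 0.

Definition derived_open_face (cc : {set 'I_m} -> 'rV[R]_m) (S : set 'rV[R]_m) : Prop :=
  S !=set0 /\
  exists eps : {set 'I_m} -> int,
    S = [set y | forall C, circuit C -> sgz (dotv (cc C) y) = eps C].

End Arr.

(* The heart of the matter is that sign(A_b) is contained in sign(A_a) only
   when a and b lie in the same open face of the derived arrangement, and that
   this suffices.  Hence Face(Sign S) is the set of points sharing the open face
   of every point of S, which is S exactly when S is one open face.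

   By Motzkin's transposition theorem (derived from a Farkas lemma proved by
   elimination) a sign vector s is infeasible for A_a iff some linear relation
   lam among the u_i, sign-compatible with s, has sum lam_i a_i >= 0, strictly or
   with lam meeting the support of s.  Every relation is a positive combination
   of conformal relations of smaller support, down to relations supported on a
   circuit C, for which sum lam_i a_i is a multiple of <c^C, a>; so a and b in
   the same open face admit the same certificates.  Conversely, for j in C the
   system <u_i, x> = b_i (i in C - j) is solvable, and transporting the sign
   vector of such an x to A_a shows that <c^C, a> and <c^C, b> both have the
   sign of c_j times the opposite residual at j. *)

From HB Require Import structures.
From mathcomp Require Import all_boot all_order all_algebra.
From mathcomp Require Import boolp classical_sets reals.
From mathcomp Require Import ring lra.
Set Implicit Arguments. Unset Strict Implicit. Unset Printing Implicit Defensive.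
Import Order.TTheory GRing.Theory Num.Theory.
Local Open Scope ring_scope.
Local Open Scope classical_set_scope.

Lemma sgz_eq_of_mul_gt0 (R : realDomainType) (s : int) (d : R) :
  sgz s = s -> 0 < s%:~R * d -> sgz d = s.
Proof.
move=> s_sgz; rewrite -sgz_gt0 sgzM sgz_int -[in RHS]s_sgz.
case: (sgzP s) => _; case: (sgzP d) => _ //.
Qed.

Lemma sgz_mul_ge0 (R : realDomainType) (l d : R) :
  0 <= l * (sgz d)%:~R -> 0 <= l * d /\ (sgz d != 0 -> l != 0 -> 0 < l * d).
Proof.
case: sgzP => [->|d_gt0|d_lt0]; rewrite ?mulr0 ?eqxx // ?mulrN1 ?mulr1 => l_sgn.
  by split => [|_ l_neq0]; [nra | rewrite mulr_gt0 // lt_neqAle eq_sym l_neq0].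
by split => [|_ l_neq0]; [nra | rewrite nmulr_lgt0 // lt_neqAle l_neq0 -oppr_ge0].
Qed.

Section DotProduct.
Variables (R : realType) (k : nat).
Implicit Types x y z : 'rV[R]_k.

Lemma dotvC x y : dotv x y = dotv y x.
Proof. by apply: eq_bigr => j _; rewrite mulrC. Qed.

Lemma dotvDl x y z : dotv (x + y) z = dotv x z + dotv y z.
Proof. by rewrite /dotv -big_split; apply: eq_bigr => j _; rewrite mxE mulrDl. Qed.

Lemma dotvZl c x z : dotv (c *: x) z = c * dotv x z.
Proof. by rewrite /dotv mulr_sumr; apply: eq_bigr => j _; rewrite mxE mulrA. Qed.

Lemma dotv0l z : dotv 0 z = 0.
Proof. by rewrite -(scale0r 0) dotvZl mul0r. Qed.

Lemma dotvBl x y z : dotv (x - y) z = dotv x z - dotv y z.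
Proof. by rewrite dotvDl -scaleN1r dotvZl mulN1r. Qed.

Lemma dotv0r z : dotv z 0 = 0.
Proof. by rewrite dotvC dotv0l. Qed.

Lemma dotvZr c x z : dotv z (c *: x) = c * dotv z x.
Proof. by rewrite dotvC dotvZl dotvC. Qed.

Lemma dotvBr x y z : dotv z (x - y) = dotv z x - dotv z y.
Proof. by rewrite dotvC dotvBl !(dotvC z). Qed.

Lemma dotv_suml (I : Type) (r : seq I) (P : pred I) (F : I -> 'rV[R]_k) z :
  dotv (\sum_(i <- r | P i) F i) z = \sum_(i <- r | P i) dotv (F i) z.
Proof. exact: (big_morph (fun x => dotv x z) (fun x y => dotvDl x y z) (dotv0l z)). Qed.

Lemma dotvv_gt0 x : x != 0 -> 0 < dotv x x.
Proof.
move=> /eqP x_neq0; have [j xj_neq0] : exists j, x 0 j != 0.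
  apply: contrapT => no_j; apply: x_neq0; apply/rowP => j; rewrite mxE.
  by apply/eqP; apply: contrapT => xj; apply: no_j; exists j; apply/negP.
rewrite /dotv (bigD1 j) //= ltr_pwDl ?mulr_gt0' //.
- by rewrite -expr2 exprn_even_gt0.
- by apply: sumr_ge0 => i _; rewrite -expr2 sqr_ge0.
Qed.

End DotProduct.

Section Farkas.
Variables (R : realType) (d : nat) (I : finType) (pos : pred I).
Implicit Types (A : {set I}) (g : I -> 'rV[R]_d) (b y : 'rV[R]_d).

Definition in_cone A g b := exists2 mu : I -> R,
  forall i, pos i -> 0 <= mu i & \sum_(i in A) mu i *: g i = b.

Definition separates A g b y :=
  [/\ forall i, i \in A -> pos i -> 0 <= dotv y (g i),
      forall i, i \in A -> ~~ pos i -> dotv y (g i) = 0 & dotv y b < 0].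

Lemma in_cone_sub A A' g b : A' \subset A -> in_cone A' g b -> in_cone A g b.
Proof.
move=> /fintype.subsetP sA'A [mu mu_ge0 <-].
exists (fun i => if i \in A' then mu i else 0); first by move=> i; case: ifP => // _ /mu_ge0.
rewrite (eq_bigr (fun i => if i \in A' then mu i *: g i else 0)) => [|i _]; last first.
  by case: ifP; rewrite ?scale0r.
rewrite -big_mkcondr; apply: eq_bigl => i; rewrite andb_idl //; exact: sA'A.
Qed.

Definition elim_along y w v := v - (dotv y v / dotv y w) *: w.

Lemma elim_along_self y w : dotv y w != 0 -> elim_along y w w = 0.
Proof. by move=> yw_neq0; rewrite /elim_along divff // scale1r subrr. Qed.

Lemma dotv_elim_along y y' w v : dotv y w != 0 ->
  dotv (y' - (dotv y' w / dotv y w) *: y) v = dotv y' (elim_along y w v).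
Proof.
by move=> yw_neq0; rewrite dotvBl dotvZl dotvBr dotvZr [dotv y v]dotvC; field.
Qed.

Section Elimination.
Variables (A : {set I}) (k : I) (g : I -> 'rV[R]_d) (b y : 'rV[R]_d).
Hypotheses (kA : k \in A) (yk_neq0 : dotv y (g k) != 0).
Let elim := elim_along y (g k).

Lemma separates_elim y' : separates (A :\ k) (elim \o g) (elim b) y' ->
  separates A g b (y' - (dotv y' (g k) / dotv y (g k)) *: y).
Proof.
have yk_eq0 : dotv y' (elim (g k)) = 0 by rewrite /elim elim_along_self ?dotv0r.
case=> y'_ge0 y'_eq0 y'b_lt0; split => [i iA|i iA|]; rewrite dotv_elim_along // -/elim.
- case: (eqVneq i k) => [->|ik]; first by rewrite yk_eq0.
  by apply: y'_ge0; rewrite !inE ik.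
- case: (eqVneq i k) => [->|ik]; first by rewrite yk_eq0.
  by apply: y'_eq0; rewrite !inE ik.
Qed.

Lemma in_cone_elim : separates (A :\ k) g b y -> (pos k -> dotv y (g k) < 0) ->
  in_cone (A :\ k) (elim \o g) (elim b) -> in_cone A g b.
Proof.
case=> y_ge0 y_eq0 yb_lt0 yk_lt0 [mu mu_ge0 sum_mu].
set gam := dotv y (g k) in yk_lt0 *.
pose kap := (dotv y b - \sum_(i in A :\ k) mu i * dotv y (g i)) / gam.
exists (fun i => if i == k then kap else mu i).
  move=> i; case: eqP => [-> pos_k|_]; last exact: mu_ge0.
  have : 0 <= \sum_(i in A :\ k) mu i * dotv y (g i).
    apply: sumr_ge0 => j jAk; have [pos_j|npos_j] := boolP (pos j).
      by rewrite mulr_ge0 ?mu_ge0 ?y_ge0.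
    by rewrite y_eq0 ?mulr0.
  have := yk_lt0 pos_k; rewrite /kap => gam_lt0 sum_ge0.
  by rewrite ler_ndivlMr // mul0r; lra.
rewrite (big_setD1 k kA) /= eqxx.
rewrite (eq_bigr (fun i => mu i *: g i)) => [|i]; last first.
  by rewrite !inE => /andP[/negbTE -> _].
have -> : \sum_(i in A :\ k) mu i *: g i
    = elim b + ((\sum_(i in A :\ k) mu i * dotv y (g i)) / gam) *: g k.
  rewrite -sum_mu mulr_suml scaler_suml -big_split /=; apply: eq_bigr => i _.
  by rewrite /elim /elim_along scalerBr scalerA mulrA subrK.
rewrite /elim /elim_along /kap; apply/rowP => j; rewrite !mxE -/gam; field; exact: yk_neq0.
Qed.

End Elimination.

Theorem farkas A g b : in_cone A g b \/ exists y, separates A g b y.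
Proof.
elim: {A}_.+1 {-2}A (ltnSn #|A|) g b => // N IH A; rewrite ltnS => AN g b.
have [-> | [k kA]] := set_0Vmem A.
  have [-> | b_neq0] := eqVneq b 0.
    by left; exists (fun=> 0) => //; rewrite big_set0.
  right; exists (- b); split => [i|i|]; rewrite ?inE //.
  by rewrite -scaleN1r dotvZl mulN1r oppr_lt0 dotvv_gt0.
have AkN : (#|A :\ k| < N)%N by rewrite (cardsD1 k A) kA in AN.
have [cone | [y sep]] := IH (A :\ k) AkN g b.
  by left; apply: in_cone_sub cone; apply: subD1set.
have [y_sep_k | y_not_sep_k] :=
  pselect ((pos k -> 0 <= dotv y (g k)) /\ (~~ pos k -> dotv y (g k) = 0)).
  right; exists y; case: sep => y_ge0 y_eq0 yb_lt0; case: y_sep_k => yk_ge0 yk_eq0.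
  split => // i iA; case: (eqVneq i k) => [-> //|ik]; [apply: y_ge0|apply: y_eq0];
    by rewrite !inE ik.
have yk_neq0 : dotv y (g k) != 0.
  by apply/eqP => yk_eq0; apply: y_not_sep_k; rewrite yk_eq0.
have yk_lt0 : pos k -> dotv y (g k) < 0.
  move=> pos_k; rewrite lt_neqAle yk_neq0 leNgt /=; apply/negP => yk_gt0.
  by apply: y_not_sep_k; split => [_|]; [exact: ltW | rewrite pos_k].
have [cone | [y' sep']] := IH (A :\ k) AkN (elim_along y (g k) \o g) (elim_along y (g k) b).
  by left; apply: in_cone_elim yk_lt0 cone.
by right; eexists; apply: separates_elim sep'.
Qed.

End Farkas.

Section Homogenization.
Variables (R : realType) (n : nat).

Definition emb (x : 'rV[R]_n) (t e : R) : 'rV[R]_(n + 2) :=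
  row_mx x (\row_(j < 2) if j == ord0 then t else e).

Lemma emb_onto (y : 'rV[R]_(n + 2)) : exists x t e, y = emb x t e.
Proof.
exists (lsubmx y), (rsubmx y 0 ord0), (rsubmx y 0 (lift ord0 ord0)).
rewrite -{1}(hsubmxK y); congr row_mx; apply/rowP => j; rewrite !mxE.
by case: ifP => [/eqP -> //|]; case: j => -[|[|//]] ? //= _; congr (y _ (rshift _ _)); apply: val_inj.
Qed.

Lemma dotv_emb x t e x' t' e' :
  dotv (emb x t e) (emb x' t' e') = dotv x x' + t * t' + e * e'.
Proof.
rewrite /dotv big_split_ord /= -addrA; congr (_ + _).
  by apply: eq_bigr => j _; rewrite !row_mxEl.
by rewrite !big_ord_recl big_ord0 addr0 !row_mxEr !mxE.
Qed.

Lemma emb_sum (I : Type) (r : seq I) (P : pred I) F T E :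
  \sum_(i <- r | P i) emb (F i) (T i) (E i) =
  emb (\sum_(i <- r | P i) F i) (\sum_(i <- r | P i) T i) (\sum_(i <- r | P i) E i).
Proof.
apply/rowP => j; rewrite summxE -(splitK j); case: (split j) => k /=.
  by rewrite row_mxEl summxE; apply: eq_bigr => i _; rewrite row_mxEl.
rewrite row_mxEr mxE; under eq_bigr do rewrite row_mxEr mxE.
by case: ifP.
Qed.

Lemma embZ c x t e : c *: emb x t e = emb (c *: x) (c * t) (c * e).
Proof.
rewrite /emb scale_row_mx; congr row_mx; apply/rowP => j; rewrite !mxE.
by case: ifP.
Qed.

Lemma emb_inj x t e x' t' e' : emb x t e = emb x' t' e' -> [/\ x = x', t = t' & e = e'].
Proof.
move=> /eq_row_mx[-> /rowP E]; split => //.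
- by have := E ord0; rewrite !mxE.
- by have := E (lift ord0 ord0); rewrite !mxE.
Qed.

End Homogenization.

Section Relations.
Variables (R : realType) (n m : nat) (u : 'I_m -> 'rV[R]_n).
Implicit Types (lam c : 'I_m -> R) (s : 'I_m -> int) (a : 'rV[R]_m).

Definition lin_rel lam := \sum_i lam i *: u i = 0.

Definition sign_compat s lam := forall i, 0 <= lam i * (s i)%:~R.

(* [lam] is not a certificate of infeasibility of the sign vector [s] in [A_a]. *)
Definition consistent s a lam :=
  \sum_i lam i * a 0 i <= 0 /\
  ((exists i, s i != 0 /\ lam i != 0) -> \sum_i lam i * a 0 i < 0).

Lemma lin_rel_dotv lam x : lin_rel lam -> \sum_i lam i * dotv (u i) x = 0.
Proof.
move=> rel_lam; transitivity (dotv (\sum_i lam i *: u i) x).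
  by rewrite dotv_suml; under [RHS]eq_bigr do rewrite dotvZl.
by rewrite rel_lam dotv0l.
Qed.

Lemma lin_relB lam c (t : R) :
  lin_rel lam -> lin_rel c -> lin_rel (fun i => lam i - t * c i).
Proof.
rewrite /lin_rel => rel_lam rel_c.
under eq_bigr do rewrite scalerBl -scalerA.
by rewrite sumrB -scaler_sumr rel_lam rel_c scaler0 subr0.
Qed.

Lemma lin_relN c : lin_rel c -> lin_rel (fun i => - c i).
Proof.
rewrite /lin_rel => rel_c.
by under eq_bigr do rewrite scaleNr; rewrite sumrN rel_c oppr0.
Qed.

End Relations.

Section Motzkin.
Variables (R : realType) (n m : nat) (u : 'I_m -> 'rV[R]_n) (a : 'rV[R]_m).
Variables (s : 'I_m -> int) (act : pred 'I_m).

(* Homogenization: a separating vector (x, t, e) of the generators [g] gives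
   t >= e > 0 (generator [ord0]) and kap_i (<u_i, x> - t a_i) >= e, resp. = 0, on
   the active rows with s_i <> 0, resp. s_i = 0; so x / t solves the system. *)
Let kap i : R := if act i then (if s i == 0 then 1 else (s i)%:~R) else 0.
Let del i : R := if act i && (s i != 0) then 1 else 0.
Let gx (o : 'I_m.+1) := if unlift ord0 o is Some i then kap i *: u i else 0.
Let gt (o : 'I_m.+1) := if unlift ord0 o is Some i then - (kap i * a 0 i) else 1.
Let ge (o : 'I_m.+1) := if unlift ord0 o is Some i then - del i else -1.
Let g o := emb (gx o) (gt o) (ge o).
Let pos (o : 'I_m.+1) := if unlift ord0 o is Some i then s i != 0 else true.

Lemma motzkin_solution y : (forall i, sgz (s i) = s i) ->
    separates pos [set: 'I_m.+1] g (emb 0 0 (-1)) y ->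
  exists x, forall i, act i -> sgz (dotv (u i) x - a 0 i) = s i.
Proof.
move=> s_sgz; have [x [t [e ->]]] := emb_onto y.
case=> y_ge0 y_eq0; rewrite dotv_emb dotv0r => e_gt0.
have := y_ge0 ord0; rewrite inE /pos /g /gx /gt /ge unlift_none dotv_emb dotv0r.
move=> /(_ isT isT) t_ge_e; have t_gt0 : 0 < t by lra.
exists (t^-1 *: x) => i act_i.
have -> : dotv (u i) (t^-1 *: x) - a 0 i = t^-1 * (dotv x (u i) - t * a 0 i).
  by rewrite dotvZr dotvC; field; rewrite gt_eqF.
rewrite sgzM gtr0_sgz ?invr_gt0 // mul1r.
have := y_ge0 (lift ord0 i); have := y_eq0 (lift ord0 i).
rewrite inE /pos /g /gx /gt /ge liftK !dotv_emb dotvZr /kap /del act_i /=.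
have [-> | si_neq0] := eqVneq (s i) 0.
  by move=> /(_ isT isT) /= eq0 _; apply/eqP; rewrite sgz_eq0; apply/eqP; lra.
move=> _ /(_ isT isT) /= ge0.
by apply: sgz_eq_of_mul_gt0 => //; rewrite mulrBr; nra.
Qed.

Lemma motzkin_certificate : in_cone pos [set: 'I_m.+1] g (emb 0 0 (-1)) ->
  exists2 lam, (forall i, ~~ act i -> lam i = 0) &
    [/\ lin_rel u lam, sign_compat s lam & ~ consistent s a lam].
Proof.
case=> mu mu_ge0; rewrite (eq_bigl xpredT) => [|o]; last by rewrite inE.
under eq_bigr do rewrite embZ.
rewrite emb_sum => /emb_inj[]; rewrite !big_ord_recl /gx /gt /ge unlift_none.
under eq_bigr do rewrite liftK; under [in X in _ -> X]eq_bigr do rewrite liftK.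
under [in X in _ -> _ -> X]eq_bigr do rewrite liftK.
pose lam i := mu (lift ord0 i) * kap i.
have mu_lift_ge0 i : s i != 0 -> 0 <= mu (lift ord0 i).
  by move=> si_neq0; apply: mu_ge0; rewrite /pos liftK.
rewrite scaler0 add0r mulr1 mulrN1 => rel_mu sum_t sum_e.
have sum_lam_a : \sum_i lam i * a 0 i = mu ord0.
  suff -> : \sum_i lam i * a 0 i = - \sum_i mu (lift ord0 i) * - (kap i * a 0 i) by lra.
  by rewrite -sumrN; apply: eq_bigr => i _; rewrite /lam; ring.
exists lam => [i /negbTE act_i|]; first by rewrite /lam /kap act_i mulr0.
split.
- by rewrite /lin_rel -[RHS]rel_mu; apply: eq_bigr => i _; rewrite scalerA.
- move=> i; rewrite /lam /kap; case: (act i); last by rewrite mulr0 mul0r.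
  have [->|si_neq0] := eqVneq (s i) 0; first by rewrite mulr0.
  by rewrite -mulrA mulr_ge0 ?mu_lift_ge0 // -expr2 sqr_ge0.
case; rewrite sum_lam_a => mu0_le0 mu0_lt0.
have mu0_ge0 : 0 <= mu ord0 by apply: mu_ge0; rewrite /pos unlift_none.
have [i] : exists i, mu (lift ord0 i) * del i != 0.
  apply: contrapT => no_i; move: sum_e; rewrite big1 => [|i _]; first by lra.
  rewrite mulrN; apply/eqP; rewrite oppr_eq0; apply: contrapT => /negP nz.
  by apply: no_i; exists i.
rewrite /del; case: ifP => [/andP[act_i si_neq0] | _]; last by rewrite mulr0 eqxx.
rewrite mulr1 => nu_neq0.
suff : mu ord0 < 0 by lra.
apply: mu0_lt0; exists i; split => //.
by rewrite /lam /kap act_i (negbTE si_neq0) mulf_neq0 // intr_eq0.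
Qed.

Theorem motzkin : (forall i, sgz (s i) = s i) ->
    ~ (exists x, forall i, act i -> sgz (dotv (u i) x - a 0 i) = s i) ->
  exists2 lam, (forall i, ~~ act i -> lam i = 0) &
    [/\ lin_rel u lam, sign_compat s lam & ~ consistent s a lam].
Proof.
move=> s_sgz no_solution.
have [|[y sep]] := farkas pos [set: 'I_m.+1] g (emb 0 0 (-1)).
  exact: motzkin_certificate.
by case: no_solution; apply: motzkin_solution sep.
Qed.

End Motzkin.

Section Conformal.
Variables (R : realType) (n m : nat) (u : 'I_m -> 'rV[R]_n).
Implicit Types (lam mu nu c : 'I_m -> R) (s : 'I_m -> int) (a : 'rV[R]_m).

Definition supp lam : {set 'I_m} := [set i | lam i != 0].

Definition conformal mu lam := forall i, mu i != 0 -> 0 < mu i * lam i.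

Lemma conformal_supp mu lam : conformal mu lam -> supp mu \subset supp lam.
Proof.
move=> conf; apply/fintype.subsetP => i; rewrite !inE => /conf.
by apply: contraTneq => ->; rewrite mulr0 ltxx.
Qed.

Lemma conformal_sign_compat s mu lam :
  sign_compat s lam -> conformal mu lam -> sign_compat s mu.
Proof.
move=> compat conf i; have [-> | mu_neq0] := eqVneq (mu i) 0; first by rewrite mul0r.
have := conf i mu_neq0; have := compat i.
have : 0 <= mu i * mu i by rewrite -expr2 sqr_ge0.
nra.
Qed.

Lemma consistent_comb s a mu nu lam (al be : R) :
  consistent s a mu -> consistent s a nu -> 0 < al -> 0 < be ->
  (forall i, lam i = al * mu i + be * nu i) -> consistent s a lam.
Proof.
move=> [mu_le0 mu_lt0] [nu_le0 nu_lt0] al_gt0 be_gt0 lamE; rewrite /consistent.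
have -> : \sum_i lam i * a 0 i = al * \sum_i mu i * a 0 i + be * \sum_i nu i * a 0 i.
  by rewrite !mulr_sumr -big_split /=; apply: eq_bigr => i _; rewrite lamE; ring.
split; first by nra.
move=> [i [si_neq0 lami_neq0]].
have [mui_eq0 | mui_neq0] := eqVneq (mu i) 0.
  have nui_neq0 : nu i != 0.
    by apply: contra lami_neq0 => /eqP nui_eq0; rewrite lamE mui_eq0 nui_eq0 !mulr0 addr0.
  by have := nu_lt0 (ex_intro _ i (conj si_neq0 nui_neq0)); nra.
by have := mu_lt0 (ex_intro _ i (conj si_neq0 mui_neq0)); nra.
Qed.

Lemma conformal_step lam c i0 : supp c \subset supp lam -> 0 < c i0 * lam i0 ->
  exists2 t : R, 0 < t & conformal (fun i => lam i - t * c i) lam /\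
    (#|supp (fun i => (lam i - t * c i)%R)| < #|supp lam|)%N.
Proof.
move=> /fintype.subsetP c_sub i0_pos.
pose P i := 0 < c i * lam i.
have [k Pk k_min] : exists2 k, P k & forall j, P j -> lam k / c k <= lam j / c j.
  by case: (@arg_minP _ R _ i0 P (fun i => lam i / c i) i0_pos) => k; exists k.
have ck_neq0 : c k != 0 by move: Pk; apply: contraTneq => eq0; rewrite /P eq0 mul0r ltxx.
have lamk_neq0 : lam k != 0 by move: Pk; apply: contraTneq => eq0; rewrite /P eq0 mulr0 ltxx.
set t := lam k / c k in k_min *.
have t_gt0 : 0 < t.
  rewrite /t (_ : lam k / c k = (c k * lam k) / (c k ^+ 2)); last by field.
  by rewrite divr_gt0 // exprn_even_gt0.
have conf : conformal (fun i => lam i - t * c i) lam.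
  move=> i /=; have [lami_eq0 | lami_neq0] := eqVneq (lam i) 0.
    have [-> | ci_neq0] := eqVneq (c i) 0; first by rewrite lami_eq0 mulr0 subrr eqxx.
    by have := c_sub i; rewrite !inE ci_neq0 lami_eq0 eqxx => /(_ isT).
  have lam2_gt0 : 0 < lam i * lam i by rewrite -expr2 exprn_even_gt0.
  have [Pi | nPi] := boolP (P i); last by rewrite /P -leNgt in nPi; nra.
  have ci_neq0 : c i != 0 by move: Pi; apply: contraTneq => eq0; rewrite /P eq0 mul0r ltxx.
  have -> : (lam i - t * c i) * lam i = (c i * lam i) * (lam i / c i - t) by field.
  move=> nz; rewrite mulr_gt0 // subr_gt0 lt_neqAle k_min // andbT.
  by apply: contra nz => /eqP ->; rewrite divfK // subrr.
exists t => //; split => //.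
apply: proper_card; apply/properP; split; first exact: conformal_supp.
by exists k; rewrite !inE ?lamk_neq0 // /t divfK // subrr eqxx.
Qed.

Lemma suppN c : supp (fun i => - c i) = supp c.
Proof. by apply/setP => i; rewrite !inE oppr_eq0. Qed.

Lemma lin_rel_proper_of_not_circuit lam i1 : lin_rel u lam -> lam i1 != 0 ->
  ~ circuit u (supp lam) ->
  exists c, [/\ lin_rel u c, exists i, c i != 0 & supp c \proper supp lam].
Proof.
move=> rel_lam lami1 not_circ.
have dep_lam : lin_dep u (supp lam).
  by exists lam; split; [move=> i; rewrite inE negbK => /eqP | split => //; exists i1].
have [D D_proper [c [c_out [c_nz rel_c]]]] :
    exists2 D : {set 'I_m}, D \proper supp lam & lin_dep u D.
  by apply: contrapT => no_D; apply: not_circ; split => // D ? ?; apply: no_D; exists D.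
exists c; split => //; apply: sub_proper_trans D_proper.
by apply/fintype.subsetP => i; rewrite inE; apply: contraR => /c_out ->.
Qed.

Lemma lin_rel_conformal_decomp lam c : lin_rel u lam -> lin_rel u c ->
    (exists i, c i != 0) -> supp c \proper supp lam ->
  exists mu nu (al be : R),
    [/\ [/\ lin_rel u mu, conformal mu lam & (#|supp mu| < #|supp lam|)%N],
        [/\ lin_rel u nu, conformal nu lam & (#|supp nu| < #|supp lam|)%N],
        0 < al, 0 < be & forall i, lam i = al * mu i + be * nu i].
Proof.
move=> rel_lam rel_c c_nz c_proper; have c_sub := proper_sub c_proper.
wlog [i0 i0_pos] : c rel_c c_nz c_proper c_sub / exists i0, 0 < c i0 * lam i0.
  move=> wlog_pos; have [|no_pos] := pselect (exists i0, 0 < c i0 * lam i0).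
    exact: wlog_pos.
  have [i1 ci1] := c_nz.
  have lami1 : lam i1 != 0 by have := fintype.subsetP c_sub i1; rewrite !inE; apply.
  apply: (wlog_pos (fun i => - c i)); rewrite ?suppN //.
  - exact: lin_relN.
  - by exists i1; rewrite oppr_eq0.
  exists i1; rewrite mulNr oppr_gt0 lt_neqAle mulf_neq0 //= leNgt.
  by apply/negP => ?; apply: no_pos; exists i1.
have [t1 t1_gt0 [conf1 card1]] := conformal_step c_sub i0_pos.
have [[j j_pos] | no_neg] := pselect (exists j, 0 < - c j * lam j).
  have negc_sub : supp (fun i => - c i) \subset supp lam by rewrite suppN.
  have [t2 t2_gt0 [conf2 card2]] := conformal_step negc_sub j_pos.
  exists (fun i => lam i - t1 * c i), (fun i => lam i - t2 * - c i), (t2 / (t1 + t2)), (t1 / (t1 + t2)).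
  split; rewrite ?divr_gt0 ?addr_gt0 //.
  - by split => //; apply: lin_relB.
  - by split => //; apply: lin_relB => //; apply: lin_relN.
  - by move=> i; field; rewrite gt_eqF ?addr_gt0.
have conf_c : conformal c lam.
  move=> i ci_neq0; have lami : lam i != 0 by have := fintype.subsetP c_sub i; rewrite !inE; apply.
  rewrite lt_neqAle eq_sym mulf_neq0 //= leNgt; apply/negP => neg.
  by apply: no_neg; exists i; rewrite mulNr oppr_gt0.
exists (fun i => lam i - t1 * c i), c, 1, t1.
split; rewrite ?ltr01 //.
- by split => //; apply: lin_relB.
- by split => //; apply: proper_card.
- by move=> i; ring.
Qed.

Lemma lin_rel_conformal_ind (P : ('I_m -> R) -> Prop) :
    (forall lam, (forall i, lam i = 0) -> P lam) ->
    (forall lam, lin_rel u lam -> circuit u (supp lam) -> P lam) ->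
    (forall lam mu nu (al be : R), conformal mu lam -> conformal nu lam ->
       0 < al -> 0 < be -> (forall i, lam i = al * mu i + be * nu i) ->
       P mu -> P nu -> P lam) ->
  forall lam, lin_rel u lam -> P lam.
Proof.
move=> P0 Pcirc Pcomb lam.
elim: {lam}_.+1 {-2}lam (ltnSn #|supp lam|) => // N IH lam; rewrite ltnS => lamN rel_lam.
have [lam0 | [i1 lami1]] : (forall i, lam i = 0) \/ exists i, lam i != 0.
  have [|no_i] := pselect (exists i, lam i != 0); first by right.
  by left => i; apply/eqP; apply: contrapT => /negP ?; apply: no_i; exists i.
  exact: P0.
have [circ | not_circ] := pselect (circuit u (supp lam)); first exact: Pcirc.
have [c [rel_c c_nz c_proper]] := lin_rel_proper_of_not_circuit rel_lam lami1 not_circ.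
have [mu [nu [al [be [[rel_mu conf_mu mu_lt] [rel_nu conf_nu nu_lt] al_gt0 be_gt0 lamE]]]]] :=
  lin_rel_conformal_decomp rel_lam rel_c c_nz c_proper.
by apply: (Pcomb lam mu nu al be) => //; apply: IH => //; apply: leq_trans lamN.
Qed.

End Conformal.

Section CircuitSigns.
Variables (R : realType) (n m : nat) (u : 'I_m -> 'rV[R]_n).
Implicit Types (lam : 'I_m -> R) (s : 'I_m -> int) (a b : 'rV[R]_m).

Lemma lin_rel_circuit_scale C (c : 'rV[R]_m) lam : circuit u C -> circuit_vec u C c ->
  lin_rel u lam -> supp lam = C -> exists al : R, forall i, lam i = al * c 0 i.
Proof.
move=> [[c0 [c0_out [[j c0j] _]]] C_min] [c_supp rel_c] rel_lam supp_lam.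
have jC : j \in C by apply: contraNT c0j => /c0_out ->.
have cj_neq0 : c 0 j != 0 by rewrite c_supp.
exists (lam j / c 0 j) => i; apply/eqP; rewrite -subr_eq0; apply: contrapT => /negP diff_i.
apply: (C_min (C :\ j)); first exact: properD1.
exists (fun i => lam i - lam j / c 0 j * c 0 i); split; last first.
  by split; [exists i | exact: lin_relB].
move=> k; rewrite !inE negb_and negbK => /orP[/eqP -> | kC]; first by rewrite divfK // subrr.
have /eqP -> : lam k == 0 by rewrite -[_ == _]negbK -supp_lam inE in kC *.
have /eqP -> : c 0 k == 0 by rewrite -[_ == _]negbK c_supp.
by rewrite mulr0 subrr.
Qed.

Lemma consistent0 s a lam : (forall i, lam i = 0) -> consistent s a lam.
Proof.
move=> lam0; rewrite /consistent big1 => [|i _]; last by rewrite lam0 mul0r.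
by split => // -[i [_]]; rewrite lam0 eqxx.
Qed.

Lemma consistent_of_solution s b x lam :
    (forall i, sgz (dotv (u i) x - b 0 i) = s i) ->
  lin_rel u lam -> sign_compat s lam -> consistent s b lam.
Proof.
move=> sol rel_lam compat; set d := fun i => dotv (u i) x - b 0 i.
have sum_d : \sum_i lam i * d i = - \sum_i lam i * b 0 i.
  transitivity (\sum_i lam i * dotv (u i) x - \sum_i lam i * b 0 i).
    by rewrite -sumrB; apply: eq_bigr => i _; rewrite /d mulrBr.
  by rewrite lin_rel_dotv // sub0r.
have term i : 0 <= lam i * d i /\ (s i != 0 -> lam i != 0 -> 0 < lam i * d i).
  by have := compat i; rewrite -sol => /sgz_mul_ge0; rewrite sol.
have sum_ge0 : 0 <= \sum_i lam i * d i by apply: sumr_ge0 => i _; case: (term i).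
split => [|[i [si_neq0 lami_neq0]]]; first by lra.
suff : 0 < \sum_i lam i * d i by lra.
rewrite (bigD1 i) //= ltr_pwDl ?(term i).2 //.
by apply: sumr_ge0 => j _; case: (term j).
Qed.

Lemma dotv_lin_rel (c r : 'rV[R]_m) y : lin_rel u (fun i => c 0 i) ->
  dotv c r = \sum_i c 0 i * (r 0 i - dotv (u i) y).
Proof.
move=> rel_c; transitivity (\sum_i c 0 i * r 0 i - \sum_i c 0 i * dotv (u i) y).
  by rewrite (lin_rel_dotv y rel_c) subr0.
by rewrite -sumrB; apply: eq_bigr => i _; rewrite mulrBr.
Qed.

Lemma lin_indep_solvable (D : {set 'I_m}) b : ~ lin_dep u D ->
  exists x, forall i, i \in D -> dotv (u i) x = b 0 i.
Proof.
move=> indep; apply: contrapT => no_x.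
have no_solution : ~ exists x, forall i, i \in D -> sgz (dotv (u i) x - b 0 i) = 0.
  move=> [x sol]; apply: no_x; exists x => i iD.
  by apply/eqP; rewrite -subr_eq0 -sgz_eq0 sol.
have [lam lam_out [rel_lam _ incons]] := motzkin (fun=> erefl) no_solution.
apply: indep; exists lam; split; first exact: lam_out.
split => //; apply: contrapT => lam0; apply: incons; apply: consistent0 => i.
by apply/eqP; apply: contrapT => /negP lami; apply: lam0; exists i.
Qed.

Section CircuitEquivalence.
Variables (cc : {set 'I_m} -> 'rV[R]_m).
Hypothesis hcc : forall C, circuit u C -> circuit_vec u C (cc C).

Definition circuit_equiv a b :=
  forall C, circuit u C -> sgz (dotv (cc C) a) = sgz (dotv (cc C) b).

Lemma circuit_equiv_consistent s a b : circuit_equiv a b ->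
    (forall lam, lin_rel u lam -> sign_compat s lam -> consistent s b lam) ->
  forall lam, lin_rel u lam -> sign_compat s lam -> consistent s a lam.
Proof.
move=> equiv cons_b; apply: lin_rel_conformal_ind.
- by move=> lam lam0 _; apply: consistent0.
- move=> lam rel_lam circ compat.
  have [al lamE] := lin_rel_circuit_scale circ (hcc circ) rel_lam erefl.
  have sum_cc (r : 'rV[R]_m) : \sum_i lam i * r 0 i = al * dotv (cc (supp lam)) r.
    by rewrite /dotv mulr_sumr; apply: eq_bigr => i _; rewrite lamE mulrA.
  have sgz_sum : sgz (\sum_i lam i * a 0 i) = sgz (\sum_i lam i * b 0 i).
    by rewrite !sum_cc !sgzM equiv.
  have [b_le0 b_lt0] := cons_b lam rel_lam compat.
  split; first by rewrite -sgz_le0 sgz_sum sgz_le0.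
  by move=> touch; rewrite -sgz_lt0 sgz_sum sgz_lt0 b_lt0.
- move=> lam mu nu al be conf_mu conf_nu al_gt0 be_gt0 lamE cons_mu cons_nu compat.
  apply: (consistent_comb _ _ al_gt0 be_gt0 lamE).
    by apply: cons_mu; apply: conformal_sign_compat compat conf_mu.
  by apply: cons_nu; apply: conformal_sign_compat compat conf_nu.
Qed.

Lemma signs_sub_of_circuit_equiv a b : circuit_equiv a b -> signs u b `<=` signs u a.
Proof.
move=> equiv _ [x ->]; apply: contrapT => not_sign.
have no_solution : ~ exists x', forall i, predT i -> sgz (dotv (u i) x' - a 0 i) = signvec u b x i.
  by move=> [x' sol]; apply: not_sign; exists x'; apply: funext => i; rewrite -sol.
have [lam _ [rel_lam compat incons]] := motzkin (fun i => sgz_id _) no_solution.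
apply: incons; apply: (circuit_equiv_consistent equiv) => // mu.
exact: consistent_of_solution.
Qed.

Lemma circuit_equiv_of_signs_sub a b : signs u b `<=` signs u a -> circuit_equiv a b.
Proof.
move=> sub C circC; have [c_supp rel_c] := hcc circC.
have [[c0 [c0_out [[j c0j] _]]] C_min] := circC.
have jC : j \in C by apply: contraNT c0j => /c0_out ->.
have [x x_sol] := lin_indep_solvable b (C_min _ (properD1 jC)).
have [x' signs_eq] := sub _ (ex_intro _ x erefl).
have same i : signvec u b x i = signvec u a x' i by rewrite signs_eq.
have x'_sol i : i \in C :\ j -> dotv (u i) x' = a 0 i.
  move=> iCj; apply/eqP; rewrite -subr_eq0 -sgz_eq0 -[sgz _]same.
  by rewrite /signvec x_sol // subrr sgz0.
have reduce (r : 'rV[R]_m) y : (forall i, i \in C :\ j -> dotv (u i) y = r 0 i) ->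
    dotv (cc C) r = cc C 0 j * - (dotv (u j) y - r 0 j).
  move=> y_sol; rewrite (dotv_lin_rel _ y rel_c) (bigD1 j) //= big1 ?addr0 ?opprB // => i ij.
  have [iC|iC] := boolP (i \in C); first by rewrite y_sol ?subrr ?mulr0 // !inE ij.
  have /eqP ci0 : cc C 0 i == 0 by rewrite -[_ == _]negbK c_supp.
  by rewrite ci0 mul0r.
rewrite (reduce a x' x'_sol) (reduce b x x_sol) !sgzM !sgzN.
by congr (_ * - _); exact: (esym (same j)).
Qed.

Lemma FaceOp_SignOpE (S : set 'rV[R]_m) :
  FaceOp u (SignOp u S) = [set a | forall b, S b -> circuit_equiv a b].
Proof.
apply/seteqP; split => a /=.
  move=> face b Sb; apply: circuit_equiv_of_signs_sub => s sb.
  by apply: face; exists b.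
by move=> equiv s [b Sb sb]; apply: signs_sub_of_circuit_equiv (equiv b Sb) _ sb.
Qed.

End CircuitEquivalence.

End CircuitSigns.

Theorem mainTheorem20 (R : realType) (n m : nat) (u : 'I_m -> 'rV[R]_n)
  (cc : {set 'I_m} -> 'rV[R]_m)
  (hu : forall i, u i != 0)
  (hcc : forall C, circuit u C -> circuit_vec u C (cc C))
  (S : set 'rV[R]_m) (hS : S !=set0) :
  FaceOp u (SignOp u S) = S <-> derived_open_face u cc S.
Proof.
rewrite (FaceOp_SignOpE hcc S); split => [classE | [[b0 Sb0] [eps S_eq]]].
  have [b0 Sb0] := hS; split => //; exists (fun C => sgz (dotv (cc C) b0)).
  rewrite -{1}classE; apply/seteqP; split => a /=.
    by move=> equiv C circC; apply: equiv.
  move=> a_b0 b Sb C circC.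
  by rewrite a_b0 //; move: Sb; rewrite -classE => /(_ b0 Sb0 C circC).
rewrite S_eq in Sb0 *; apply/seteqP; split => a /= => [a_equiv C circC | a_eps b b_eps C circC].
  by rewrite (a_equiv b0 Sb0 C circC); apply: Sb0.
by rewrite a_eps // b_eps.
Qed.
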